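(* Let $0\le q<\tfrac12$ and $p=1-q$. Let $X_1,X_2,\dots$ be i.i.d. letters in $\{S,H\}$ with $\mathbb{P}[X_i=S]=q$ and $\mathbb{P}[X_i=H]=p$. Define the selfish-mining attack cycle and the random variable $L$ as follows: (i) if $X_1=H$, the cycle is $H$ and $L=1$; (ii) if $X_1X_2=SH$, the cycle is $X_1X_2X_3$ (with $X_3\in\{S,H\}$ arbitrary) and $L=2$; (iii) if $X_1X_2=SS$, the cycle is $X_1\cdots X_m$, where $m\ge 3$ is the first index with $X_m=H$ and (number of $S$ among $X_1,\dots,X_m$) $-$ (number of $H$ among $X_1,\dots,X_m$) $=1$; in this case $L$ is the number of letters $S$ in the cycle. Then $\mathbb{P}[L=1]=p$, $\mathbb{P}[L=2]=pq+pq^2$, and for every $n\ge 3$, $$\mathbb{P}[L=n]=pq^2(pq)^{n-2}C_{n-2},$$ where $C_k=\frac{(2k)!}{k!\,(k+1)!}$ is the $k$-th Catalan number.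
   Context: This models the Selfish Mining strategy in Bitcoin: each newly validated block is found by the selfish miner (letter $S$, relative hashrate $q$) or by the honest miners (letter $H$, relative hashrate $p$), independently. $L$ is the number of blocks added to the official blockchain during one attack cycle. For example, the cycle $SSSHSHH$ has $L=4$, and the cycle $SSH$ has $L=2$. *)

From Stdlib Require Import Reals Lra Lia List Arith.
Open Scope R_scope.

(* Letters: true = S (selfish miner, prob q), false = H (honest, prob p = 1-q). *)

(* Case (iii): scanning X_3, X_4, ... with nS = #S and nH = #H read so far.
   Stops at the first H after which #S - #H = 1, returning L = #S. *)
Fixpoint scan_iii (nS nH : nat) (w : list bool) : option nat :=
  match w with
  | nil => None
  | true :: r => scan_iii (Datatypes.S nS) nH r
  | false :: r => if Nat.eqb nS (Datatypes.S nH + 1) then Some nS else scan_iii nS (Datatypes.S nH) r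
  end.

(* [L_of_prefix w] = Some n  iff the finite prefix w of X_1 X_2 ... already
   contains a complete attack cycle, whose value of L is n; None otherwise. *)
Definition L_of_prefix (w : list bool) : option nat :=
  match w with
  | false :: _ => Some 1%nat
  | true :: false :: _ :: _ => Some 2%nat        (* (ii)  cycle S H X_3 *)
  | true :: true :: r => scan_iii 2 0 r
  | _ => None
  end.

Fixpoint all_words (N : nat) : list (list bool) :=
  match N with
  | O => nil :: nil
  | Datatypes.S N' => map (cons true) (all_words N') ++ map (cons false) (all_words N')
  end.

Definition word_prob (q : R) (w : list bool) : R :=
  fold_right (fun (x : bool) (acc : R) => (if x then q else 1 - q) * acc) 1 w.

(* P[ the cycle is completed within the first N letters and L = n ]. *)
Definition prob_L_within (q : R) (n N : nat) : R :=
  fold_right Rplus 0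
    (map (word_prob q)
       (filter (fun w => match L_of_prefix w with
                         | Some m => Nat.eqb m n
                         | None => false end) (all_words N))).

(* P[L = n] is the limit as N -> oo of the above increasing sequence
   (continuity of the product measure from below on the union of cylinders).
   [prob_L_is q n v] means P[L = n] = v. *)
Definition prob_L_is (q : R) (n : nat) (v : R) : Prop :=
  Un_cv (prob_L_within q n) v.

Definition catalan (k : nat) : R :=
  INR (fact (2 * k)) / (INR (fact k) * INR (fact (k + 1))).

From Stdlib Require Import Reals Lra Lia List Arith.
Open Scope R_scope.

(* Every cycle with L = n has at most 2n - 1 letters, so [prob_L_within q n N]
   is constant for N >= 2n - 1 and P[L = n] is a finite sum.
   After the prefix SS, case (iii) is a walk of the lead e = #S - #H - 1 that
   starts at 1, moves up on S and down on H, and stops when an H is read at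
   e = 1.  Starting from lead e, the paths that stop after j further letters S
   (and hence j + e letters H) are counted by the ballot number
   b(e, j) = e (2j+e-1)! / (j! (j+e)!): first-step analysis gives
   b(e, j+1) = b(e+1, j) + b(e-1, j+1) with b(0, j+1) = 0, which the closed form
   satisfies.  For e = 1 it is the Catalan number. *)

Definition sum_list (l : list R) : R := fold_right Rplus 0 l.

Lemma sum_list_app (l1 l2 : list R) : sum_list (l1 ++ l2) = sum_list l1 + sum_list l2.
Proof. induction l1 as [|x l1 IH]; simpl; [ring | unfold sum_list in *; rewrite IH; ring]. Qed.

Definition cyl_prob (q : R) (E : list bool -> bool) (N : nat) : R :=
  sum_list (map (word_prob q) (filter E (all_words N))).

Lemma cyl_prob_ext q (E F : list bool -> bool) N :
  (forall w, E w = F w) -> cyl_prob q E N = cyl_prob q F N.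
Proof. intro EF; unfold cyl_prob; rewrite (filter_ext E F EF); reflexivity. Qed.

Lemma sum_prob_filter_cons q E (b : bool) (l : list (list bool)) :
  sum_list (map (word_prob q) (filter E (map (cons b) l))) =
  (if b then q else 1 - q) * sum_list (map (word_prob q) (filter (fun w => E (b :: w)) l)).
Proof.
  induction l as [|w l IH]; simpl; [ring|].
  destruct (E (b :: w)); simpl; unfold sum_list in *; rewrite ?IH; simpl; ring.
Qed.

Lemma cyl_prob_S q E N :
  cyl_prob q E (S N) =
  q * cyl_prob q (fun w => E (true :: w)) N + (1 - q) * cyl_prob q (fun w => E (false :: w)) N.
Proof.
  unfold cyl_prob; simpl all_words.
  rewrite filter_app, map_app, sum_list_app, !sum_prob_filter_cons; reflexivity.
Qed.

Lemma cyl_prob_const q (b : bool) N :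
  cyl_prob q (fun _ => b) N = if b then 1 else 0.
Proof.
  induction N as [|N IH]; [destruct b; unfold cyl_prob, sum_list; simpl; ring|].
  rewrite cyl_prob_S, IH; destruct b; ring.
Qed.

Definition hits (n : nat) (o : option nat) : bool :=
  match o with Some m => Nat.eqb m n | None => false end.

Definition scan_prob (q : R) (nS nH n N : nat) : R :=
  cyl_prob q (fun w => hits n (scan_iii nS nH w)) N.

Lemma scan_iii_ge nS nH w m : scan_iii nS nH w = Some m -> (nS <= m)%nat.
Proof.
  revert nS nH; induction w as [|[|] w IH]; intros nS nH Hscan; simpl in Hscan.
  - discriminate.
  - apply IH in Hscan; lia.
  - destruct (Nat.eqb nS _); [injection Hscan; lia | exact (IH _ _ Hscan)].
Qed.

Lemma scan_prob_below q nS nH n N : (n < nS)%nat -> scan_prob q nS nH n N = 0.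
Proof.
  intro Hn; unfold scan_prob.
  rewrite (cyl_prob_ext _ _ (fun _ => false)), cyl_prob_const; [reflexivity|].
  intro w; destruct (scan_iii nS nH w) as [m|] eqn:Hscan; [|reflexivity].
  apply scan_iii_ge in Hscan; apply Nat.eqb_neq; lia.
Qed.

(* At e = 0 the factor e makes the truncated [2*j+e-1] irrelevant. *)
Definition ballot (e j : nat) : R :=
  INR e * INR (fact (2 * j + e - 1)) / (INR (fact j) * INR (fact (j + e))).

Lemma ballot_0 e : (1 <= e)%nat -> ballot e 0 = 1.
Proof.
  destruct e as [|e]; [lia|]; intros _; unfold ballot.
  replace (2 * 0 + S e - 1)%nat with e by lia.
  rewrite Nat.add_0_l, fact_simpl, mult_INR; simpl (fact 0); simpl (INR 1).
  field; split; [apply INR_fact_neq_0 | apply not_0_INR; lia].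
Qed.

Lemma ballot_of_0 j : ballot 0 j = 0.
Proof. unfold ballot; simpl (INR 0); field; split; apply INR_fact_neq_0. Qed.

Lemma ballot_S e j : ballot (S e) (S j) = ballot (S (S e)) j + ballot e (S j).
Proof.
  unfold ballot.
  replace (2 * S j + S e - 1)%nat with (S (2 * j + e + 1)) by lia.
  replace (2 * j + S (S e) - 1)%nat with (2 * j + e + 1)%nat by lia.
  replace (2 * S j + e - 1)%nat with (2 * j + e + 1)%nat by lia.
  replace (S j + S e)%nat with (S (j + S e)) by lia.
  replace (j + S (S e))%nat with (S (j + S e)) by lia.
  replace (S j + e)%nat with (j + S e)%nat by lia.
  rewrite !fact_simpl, !mult_INR, !S_INR, !plus_INR, !S_INR, mult_INR, INR_0; simpl (INR 2).
  pose proof (INR_fact_neq_0 j); pose proof (INR_fact_neq_0 (j + S e)).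
  pose proof (pos_INR j); pose proof (pos_INR e).
  field; repeat split; lra.
Qed.

Lemma ballot_1 k : ballot 1 k = catalan k.
Proof.
  unfold ballot, catalan; replace (2 * k + 1 - 1)%nat with (2 * k)%nat by lia.
  simpl (INR 1); field; split; apply INR_fact_neq_0.
Qed.

(* The lead of the walk is e = nS - nH - 1 = S d. *)
Lemma scan_prob_ballot q N : forall nS nH d j,
  nS = (nH + 2 + d)%nat -> (2 * j + d < N)%nat ->
  scan_prob q nS nH (nS + j) N = ballot (S d) j * q ^ j * (1 - q) ^ (j + S d).
Proof.
  induction N as [|N IH]; intros nS nH d j HnS HN; [lia|].
  unfold scan_prob; rewrite cyl_prob_S; simpl scan_iii.
  fold (scan_prob q (S nS) nH (nS + j) N).
  destruct (Nat.eqb_spec nS (S (nH + 1))) as [Hstop|Hgo].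
  - assert (d = 0%nat) by lia; subst d.
    rewrite cyl_prob_const; destruct j as [|j].
    + rewrite scan_prob_below, ballot_0 by lia; simpl hits.
      rewrite Nat.add_0_r, Nat.eqb_refl; simpl; ring.
    + simpl hits; replace (Nat.eqb nS (nS + S j)) with false by (symmetry; apply Nat.eqb_neq; lia).
      replace (nS + S j)%nat with (S nS + j)%nat by lia.
      rewrite (IH (S nS) nH 1%nat j), (ballot_S 0 j), ballot_of_0 by lia.
      simpl; rewrite Nat.add_succ_r; simpl; ring.
  - destruct d as [|d]; [lia|].
    fold (scan_prob q nS (S nH) (nS + j) N).
    rewrite (IH nS (S nH) d j) by lia.
    destruct j as [|j].
    + rewrite scan_prob_below, !ballot_0 by lia. simpl; ring.
    + replace (nS + S j)%nat with (S nS + j)%nat by lia.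
      rewrite (IH (S nS) nH (S (S d)) j), (ballot_S (S d) j) by lia.
      rewrite !Nat.add_succ_r; simpl; ring.
Qed.

Lemma scan_prob_catalan q n N : (2 <= n)%nat -> (2 * n < N + 4)%nat ->
  scan_prob q 2 0 n N = catalan (n - 2) * q ^ (n - 2) * (1 - q) ^ (n - 1).
Proof.
  intros Hn HN; replace n with (2 + (n - 2))%nat at 1 by lia.
  rewrite (scan_prob_ballot q N 2 0 0 (n - 2)), ballot_1 by lia.
  replace (n - 2 + 1)%nat with (n - 1)%nat by lia; reflexivity.
Qed.

Lemma prob_L_within_decomp q n N :
  prob_L_within q n (S (S (S N))) =
  (1 - q) * (if Nat.eqb 1 n then 1 else 0) + q * (1 - q) * (if Nat.eqb 2 n then 1 else 0)
  + q * q * scan_prob q 2 0 n (S N).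
Proof.
  change (prob_L_within q n (S (S (S N))))
    with (cyl_prob q (fun w => hits n (L_of_prefix w)) (S (S (S N)))).
  rewrite cyl_prob_S, (cyl_prob_S _ _ (S N)); simpl L_of_prefix.
  rewrite (cyl_prob_S _ (fun w => hits n match w with nil => None | _ :: _ => Some 2%nat end)).
  change (hits n (Some 1%nat)) with (Nat.eqb 1 n); change (hits n (Some 2%nat)) with (Nat.eqb 2 n).
  rewrite !cyl_prob_const; unfold scan_prob; ring.
Qed.

Lemma Un_cv_eventually_const (u : nat -> R) v N0 :
  (forall N, (N0 <= N)%nat -> u N = v) -> Un_cv u v.
Proof.
  intros Hu eps Heps; exists N0; intros n Hn.
  rewrite Hu by exact Hn; unfold R_dist; rewrite Rminus_diag, Rabs_R0; exact Heps.
Qed.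

Lemma prob_L_is_of_decomp q n v :
  (forall N, (2 * n <= N)%nat ->
     (1 - q) * (if Nat.eqb 1 n then 1 else 0) + q * (1 - q) * (if Nat.eqb 2 n then 1 else 0)
     + q * q * scan_prob q 2 0 n (S N) = v) ->
  prob_L_is q n v.
Proof.
  intro Hv; apply (Un_cv_eventually_const _ _ (2 * n + 3)); intros N HN.
  replace N with (S (S (S (N - 3)))) by lia.
  rewrite prob_L_within_decomp; apply Hv; lia.
Qed.

Theorem mainTheorem1 (q : R) (hq : 0 <= q < 1 / 2) :
  let p := 1 - q in
  prob_L_is q 1 p /\
  prob_L_is q 2 (p * q + p * q ^ 2) /\
  (forall n : nat, (3 <= n)%nat ->
     prob_L_is q n (p * q ^ 2 * (p * q) ^ (n - 2) * catalan (n - 2))).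
Proof.
  intro p; split; [|split].
  - apply prob_L_is_of_decomp; intros N _.
    rewrite scan_prob_below by lia; simpl; unfold p; ring.
  - apply prob_L_is_of_decomp; intros N _.
    rewrite scan_prob_catalan by lia; unfold catalan, p; simpl; field.
  - intros n Hn; apply prob_L_is_of_decomp; intros N HN.
    rewrite scan_prob_catalan by lia.
    replace (Nat.eqb 1 n) with false by (symmetry; apply Nat.eqb_neq; lia).
    replace (Nat.eqb 2 n) with false by (symmetry; apply Nat.eqb_neq; lia).
    replace (n - 1)%nat with (S (n - 2)) by lia.
    rewrite Rpow_mult_distr; unfold p; simpl; ring.
Qed.
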